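(* Let $0<\delta<1$, let $r\ge2$ be an integer, and let $G$ be an $(n,d,\lambda)$-graph with $\lambda<\delta d$. Then, with activation threshold $r$, every set of vertices of size larger than $\frac{(r-1)n}{(1-\delta)d}$ is contagious.
   Context: Bootstrap percolation with threshold $r\ge 2$ on a graph $G=(V,E)$: given a set $A_0\subseteq V$ of seeds, define for $i\ge1$ $A_i=A_{i-1}\cup\{v:|N(v)\cap A_{i-1}|\ge r\}$, where $N(v)$ is the set of neighbors of $v$, and $\langle A_0\rangle=\bigcup_i A_i$. The set $A_0$ is contagious if $\langle A_0\rangle=V$. An $(n,d,\lambda)$-graph is a $d$-regular graph on $n$ vertices whose adjacency eigenvalues $d=\lambda_1\ge\lambda_2\ge\dots\ge\lambda_n$ satisfy $\max\{|\lambda_2|,|\lambda_n|\}\le\lambda$. *)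

From HB Require Import structures.
From mathcomp Require Import all_boot all_order all_algebra.
Set Implicit Arguments. Unset Strict Implicit. Unset Printing Implicit Defensive.
Import Order.TTheory GRing.Theory Num.Theory.
Local Open Scope ring_scope.

Definition simple_graph (n : nat) (e : rel 'I_n) : Prop :=
  (forall u v, e u v = e v u) /\ (forall v, ~~ e v v).

Definition nbhd (n : nat) (e : rel 'I_n) (v : 'I_n) : {set 'I_n} :=
  [set u | e v u].

Definition regular (n : nat) (e : rel 'I_n) (d : nat) : Prop :=
  forall v, #|nbhd e v| = d.

Definition adj_mx (R : nzRingType) (n : nat) (e : rel 'I_n) : 'M[R]_n :=
  \matrix_(i, j) (e i j)%:R.

Definition adj_spectrum (R : rcfType) (n : nat) (e : rel 'I_n) (s : seq R) :=
  [/\ size s = n, sorted (fun x y : R => y <= x) s &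
      char_poly (adj_mx R e) = \prod_(x <- s) ('X - x%:P)].

Definition ndl_graph (R : rcfType) (n d : nat) (lam : R) (e : rel 'I_n) : Prop :=
  [/\ simple_graph e, regular e d &
      exists s : seq R, adj_spectrum e s /\
        (forall i : nat, (1 <= i < n)%N -> `|s`_i| <= lam)].

Definition bp_step (n : nat) (e : rel 'I_n) (r : nat) (A : {set 'I_n}) : {set 'I_n} :=
  A :|: [set v | (r <= #|nbhd e v :&: A|)%N].

Definition bp_iter (n : nat) (e : rel 'I_n) (r : nat) (A0 : {set 'I_n}) (i : nat) :=
  iter i (bp_step e r) A0.

Definition in_span (n : nat) (e : rel 'I_n) (r : nat) (A0 : {set 'I_n}) (v : 'I_n) : Prop :=
  exists i : nat, v \in bp_iter e r A0 i.

Definition contagious (n : nat) (e : rel 'I_n) (r : nat) (A0 : {set 'I_n}) : Prop :=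
  forall v : 'I_n, in_span e r A0 v.

From HB Require Import structures.
From mathcomp Require Import all_boot all_order all_algebra.
From mathcomp Require Import sesquilinear spectral complex.
From mathcomp Require Import ring lra.
Set Implicit Arguments. Unset Strict Implicit. Unset Printing Implicit Defensive.
Import Order.TTheory GRing.Theory Num.Theory.
Local Open Scope ring_scope.
Local Open Scope sesquilinear_scope.

(* Let [S] be the bootstrap closure of the seed set [A0] and suppose some
   vertex is missed, so that the complement [B] of [S] is nonempty.  Every
   vertex of [B] has fewer than [r] neighbours in [S], hence the cut between
   [S] and [B] has at most [(r - 1) |B|] edges.  On the other hand, the
   expander mixing lemma bounds the cut from below by [(d - lam) |S| |B| / n];
   together, [(d - lam) |S| <= (r - 1) n].  Since [|A0| <= |S|] and
   [d - lam > (1 - delta) d], this contradicts the size assumption on [A0]. *)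

Local Notation "x %:C" := (real_complex _ x).

Lemma char_poly_conj (F : fieldType) n (P B : 'M[F]_n) :
  P \in unitmx -> char_poly (invmx P *m B *m P) = char_poly B.
Proof.
move=> Pu; rewrite /char_poly.
have -> : char_poly_mx (invmx P *m B *m P) =
    map_mx polyC (invmx P) *m char_poly_mx B *m map_mx polyC P.
  rewrite /char_poly_mx mulmxBr mulmxBl -!map_mxM.
  by rewrite mul_mx_scalar -scalemxAl -map_mxM mulVmx // map_mx1 scalemx1.
by rewrite !det_mulmx mulrC mulrA -det_mulmx -map_mxM mulmxV // map_mx1 det1 mul1r.
Qed.

Lemma count_gt_le1 (R : realDomainType) (s : seq R) (lam : R) :
  (forall i, (1 <= i < size s)%N -> s`_i <= lam) ->
  (count (fun t : R => (lam < t)%R) s <= 1)%N.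
Proof.
case: s => [|a s] //= s_le.
suff -> : count (fun t : R => (lam < t)%R) s = 0%N by case: (lam < a).
apply/eqP; rewrite -leqn0 leqNgt -has_count; apply/hasP => -[t ts].
have [i ilt <-] := nthP 0 ts.
by have := s_le i.+1; rewrite /= ltnS ilt => /(_ isT); rewrite leNgt => /negbTE ->.
Qed.

Lemma count_enum_card (T : finType) (p : pred T) : count p (enum T) = #|p|.
Proof.
rewrite cardE -size_filter /enum_mem -filter_predI; congr size.
by apply: eq_filter => x /=; rewrite andbT.
Qed.

Lemma real_complex_real {R : rcfType} (t : R) : real_complex R t \is Num.real.
Proof. by apply/complex_realP; exists t. Qed.

Section HermitianForm.
Variables (R : rcfType) (n : nat) (A : 'M[R[i]]_n) (s : seq R) (lam mu : R)
  (u : 'rV[R[i]]_n).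
Hypothesis A_herm : A \is hermsymmx.
Hypothesis A_spec : char_poly A = \prod_(t <- s) ('X - t%:C%:P).
Hypothesis s_top : (count (fun t : R => (lam < t)%R) s <= 1)%N.
Hypothesis lam_mu : lam < mu.
Hypothesis u_neq0 : u != 0.
Hypothesis u_eigen : u *m A = mu%:C *: u.

Let P := spectralmx A.
Let D := spectral_diag A.

Lemma spectral_decomp : A = P^t* *m diag_mx D *m P.
Proof.
rewrite -invmx_unitary ?spectral_unitarymx //.
exact/orthomx_spectralP/hermitian_normalmx.
Qed.

Lemma unitary_inner {m p : nat} (x : 'M[R[i]]_(m, n)) (y : 'M[R[i]]_(p, n)) :
  (x *m P^t*) *m (y *m P^t*)^t* = x *m y^t*.
Proof. by rewrite trmx_mul map_mxM trmxCK mulmxA mulmxKtV ?spectral_unitarymx. Qed.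

Lemma D_real k : D 0 k \is Num.real.
Proof. by have /mxOverP := hermitian_spectral_diag_real A_herm; apply. Qed.

Lemma D_perm_spec : perm_eq [seq D 0 k | k <- enum 'I_n] (map (real_complex R) s).
Proof.
apply: prod_XsubC_eq; rewrite big_map big_enum /= big_map -A_spec.
rewrite spectral_decomp -invmx_unitary ?spectral_unitarymx //.
rewrite char_poly_conj ?spectral_unit //.
rewrite char_poly_trig ?diag_mx_is_trig //.
by apply: eq_bigr => k _; rewrite mxE eqxx mulr1n.
Qed.

Lemma D_top_unique k k' : lam%:C < D 0 k -> lam%:C < D 0 k' -> k = k'.
Proof.
move=> Dk Dk'; apply/eqP; apply: contraT => neq_kk'.
have := permP D_perm_spec (fun t => lam%:C < t).
rewrite (count_map (fun k => D 0 k)) (count_map (real_complex R)).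
rewrite (@eq_count _ _ (fun t : R => (lam < t)%R)) => [|t /=]; last by rewrite ltcR.
rewrite count_enum_card => card_eq.
by move: s_top; rewrite -card_eq (cardD1 k) (cardD1 k') !inE eq_sym neq_kk' /= Dk Dk'.
Qed.

Let w := u *m P^t*.

Lemma coord_eigen : w *m diag_mx D = mu%:C *: w.
Proof.
have -> : w *m diag_mx D = u *m A *m P^t*.
  by rewrite /w [in RHS]spectral_decomp !mulmxA mulmxtVK ?spectral_unitarymx.
by rewrite u_eigen scalemxAl.
Qed.

(* If [D] has an entry above [lam] at [k], then [w] is supported on [k]:
   any other coordinate of [w] would carry a second eigenvalue [mu > lam]. *)
Lemma coord_support {k k' : 'I_n} : lam%:C < D 0 k -> k' != k -> w 0 k' = 0.
Proof.
move=> Dk neq_k'k; apply/eqP; apply: contraNT neq_k'k => w_k'.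
have /matrixP/(_ 0 k') := coord_eigen; rewrite mul_mx_diag mxE [in RHS]mxE => /eqP.
rewrite mulrC -subr_eq0 -mulrBl mulf_eq0 (negbTE w_k') orbF subr_eq0 => /eqP Dk'.
by apply/eqP/D_top_unique; rewrite // Dk' ltcR.
Qed.

Lemma coord_top {k : 'I_n} : lam%:C < D 0 k -> w 0 k != 0.
Proof.
move=> Dk; apply: contra u_neq0 => /eqP w_k.
have w0 : w = 0.
  apply/rowP => j; rewrite [RHS]mxE; have [->|neq_jk] := eqVneq j k; first exact: w_k.
  exact: coord_support Dk neq_jk.
by rewrite -(mulmxKtV u (spectral_unitarymx A) erefl) -/w w0 mul0mx.
Qed.

(* Main inequality: in the eigenbasis, the coordinates of [x] vanish wherever
   the eigenvalue exceeds [lam], since [x] is orthogonal to [u]. *)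
Lemma hermitian_form_le (x : 'rV[R[i]]_n) : x *m u^t* = 0 ->
  (x *m A *m x^t*) 0 0 <= lam%:C * (x *m x^t*) 0 0.
Proof.
move=> x_perp; set y := x *m P^t*.
have y_top k : lam%:C < D 0 k -> y 0 k = 0.
  move=> Dk; have /matrixP/(_ 0 0) := unitary_inner x u; rewrite x_perp -/y -/w.
  rewrite mxE [RHS]mxE (bigD1 k) //= big1 => [|j neq_jk]; last first.
    by rewrite [_ j 0]mxE [_^T _ _]mxE (coord_support Dk neq_jk) conjC0 mulr0.
  rewrite addr0 [_ k 0]mxE [_^T _ _]mxE => /eqP.
  rewrite mulf_eq0 conjC_eq0 (negbTE (coord_top Dk)).
  by rewrite orbF => /eqP.
have -> : x *m A *m x^t* = y *m diag_mx D *m y^t*.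
  by rewrite trmx_mul map_mxM trmxCK {1}spectral_decomp !mulmxA.
rewrite -(unitary_inner x x) -/y mul_mx_diag mxE [X in _ <= _ * X]mxE mulr_sumr.
apply: ler_sum => k _; rewrite [_ k 0]mxE [_^T _ _]mxE [_ 0 k]mxE.
have [D_le|D_gt] := real_leP (D_real k) (real_complex_real lam).
  by rewrite mulrAC [leRHS]mulrC ler_wpM2l // mul_conjC_ge0.
by rewrite (y_top k D_gt) !mul0r mulr0.
Qed.

End HermitianForm.

Definition adj_form {R : nzRingType} {n : nat} (e : rel 'I_n) (x : 'I_n -> R) : R :=
  \sum_j (\sum_i x i * (e i j)%:R) * x j.

Section RealRows.
Variables (R : rcfType) (n : nat).

Lemma real_row_mul (x : 'I_n -> R) (M : 'M[R]_n) :
  (\row_i (x i)%:C) *m map_mx (real_complex R) M = \row_j (\sum_i x i * M i j)%:C.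
Proof.
apply/rowP => j; rewrite !mxE rmorph_sum.
by apply: eq_bigr => i _; rewrite !mxE rmorphM.
Qed.

Lemma real_row_inner (x y : 'I_n -> R) :
  ((\row_i (x i)%:C) *m (\row_i (y i)%:C)^t*) 0 0 = (\sum_i x i * y i)%:C.
Proof.
rewrite mxE rmorph_sum; apply: eq_bigr => i _.
by rewrite !mxE conj_Creal ?real_complex_real // rmorphM.
Qed.

End RealRows.

Lemma sum_indicator (R : nzSemiRingType) (T : finType) (A : {set T}) :
  \sum_(i : T) (((i \in A) : nat)%:R : R) = #|A|%:R.
Proof.
rewrite -sum1_card natr_sum [RHS]big_mkcond /=.
by apply: eq_bigr => i _; case: (i \in A).
Qed.

Definition cut_size (n : nat) (e : rel 'I_n) (S : {set 'I_n}) : nat :=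
  \sum_(j in ~: S) #|nbhd e j :&: S|.

Lemma cut_size_closed (n r : nat) (e : rel 'I_n) (S : {set 'I_n}) :
  (forall j, j \notin S -> (#|nbhd e j :&: S| < r)%N) ->
  (cut_size e S <= #|~: S| * r.-1)%N.
Proof.
move=> S_closed; rewrite /cut_size -sum_nat_const; apply: leq_sum => j.
by rewrite inE => /S_closed; case: r {S_closed}.
Qed.

(* The test vector of the expander mixing lemma: [n 1_B - |B| 1] with [B] the
   complement of [S]; it is orthogonal to the all-ones vector. *)
Definition cut_vector (R : nzRingType) (n : nat) (S : {set 'I_n}) (i : 'I_n) : R :=
  n%:R * ((i \in ~: S) : nat)%:R - #|~: S|%:R.

Section CutVector.
Variables (R : comNzRingType) (n d : nat) (e : rel 'I_n) (S : {set 'I_n}).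
Hypothesis e_sym : forall u v, e u v = e v u.
Hypothesis e_reg : regular e d.
Local Notation B := (~: S).
Local Notation x := (@cut_vector R n S).

Lemma card_split : n%:R = #|B|%:R + #|S|%:R :> R.
Proof. by rewrite -natrD addnC cardsC card_ord. Qed.

Lemma degree_sum_row i : \sum_j ((e i j)%:R : R) = d%:R.
Proof. by rewrite -(e_reg i) -sum_indicator; apply: eq_bigr => j _; rewrite inE. Qed.

Lemma degree_sum j : \sum_i ((e i j)%:R : R) = d%:R.
Proof. by rewrite -(degree_sum_row j); apply: eq_bigr => i _; rewrite e_sym. Qed.

Lemma cut_vector_sum : \sum_i x i = 0.
Proof.
rewrite /cut_vector sumrB -mulr_sumr sum_indicator sumr_const card_ord.
by rewrite -[#|B|%:R *+ n]mulr_natr; ring.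
Qed.

Lemma cut_vector_norm : \sum_i x i ^+ 2 = n%:R * #|B|%:R * #|S|%:R.
Proof.
have sq_x i : x i ^+ 2 = (n%:R ^+ 2 - 2%:R * n%:R * #|B|%:R) * ((i \in B) : nat)%:R
    + #|B|%:R ^+ 2.
  by rewrite /cut_vector; case: (i \in B) => /=; ring.
rewrite (eq_bigr _ (fun i _ => sq_x i)) big_split /= -mulr_sumr sum_indicator.
by rewrite sumr_const card_ord -[_ ^+ 2 *+ n]mulr_natr card_split; ring.
Qed.

Lemma nbhd_count j :
  \sum_i ((i \in B) : nat)%:R * (e i j)%:R = #|nbhd e j :&: B|%:R :> R.
Proof.
rewrite -sum_indicator; apply: eq_bigr => i _.
by rewrite -natrM mulnb /nbhd !inE e_sym andbC.
Qed.

Lemma sum_nbhd_count : \sum_j #|nbhd e j :&: B|%:R = #|B|%:R * d%:R :> R.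
Proof.
under eq_bigr do rewrite -nbhd_count.
rewrite exchange_big /=; under eq_bigr do rewrite -mulr_sumr degree_sum_row.
by rewrite -mulr_suml sum_indicator.
Qed.

(* Inside [B], each vertex has [d] neighbours, of which those in [S] form the
   cut. *)
Lemma sum_nbhd_count_in :
  \sum_(j in B) #|nbhd e j :&: B|%:R = #|B|%:R * d%:R - (cut_size e S)%:R :> R.
Proof.
rewrite /cut_size natr_sum mulr_natl -sumr_const -sumrB; apply: eq_bigr => j _.
by rewrite -(e_reg j) -(cardsID S (nbhd e j)) natrD setDE addrAC subrr add0r.
Qed.

Lemma cut_vector_row j :
  \sum_i x i * (e i j)%:R = n%:R * #|nbhd e j :&: B|%:R - #|B|%:R * d%:R.
Proof.
rewrite /cut_vector; under eq_bigr do rewrite mulrBl -mulrA.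
by rewrite sumrB -!mulr_sumr degree_sum nbhd_count.
Qed.

Lemma sum_nbhd_cut_vector : \sum_j #|nbhd e j :&: B|%:R * x j =
  n%:R * (#|B|%:R * d%:R - (cut_size e S)%:R) - #|B|%:R * (#|B|%:R * d%:R).
Proof.
rewrite -sum_nbhd_count_in -sum_nbhd_count !mulr_sumr [in RHS]big_mkcond -sumrB /=.
by apply: eq_bigr => j _; rewrite /cut_vector; case: (j \in B) => /=; ring.
Qed.

Lemma cut_vector_form :
  adj_form e x = n%:R * (d%:R * #|B|%:R * #|S|%:R - n%:R * (cut_size e S)%:R).
Proof.
rewrite /adj_form; under eq_bigr do rewrite cut_vector_row mulrBl -!mulrA.
rewrite sumrB -!mulr_sumr cut_vector_sum mulr0 mulr0 subr0 sum_nbhd_cut_vector.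
by congr (_ * _); rewrite card_split; ring.
Qed.

End CutVector.

Section AdjacencySpectrum.
Variables (R : rcfType) (n d : nat) (e : rel 'I_n) (lam : R) (s : seq R).
Hypothesis e_sym : forall u v, e u v = e v u.
Hypothesis e_reg : regular e d.
Hypothesis e_spec : adj_spectrum e s.
Hypothesis s_small : forall i, (1 <= i < n)%N -> `|s`_i| <= lam.
Hypothesis lam_d : lam < d%:R.
Hypothesis n_gt0 : (0 < n)%N.

Lemma adj_mx_complex : adj_mx R[i] e = map_mx (real_complex R) (adj_mx R e).
Proof. by apply/matrixP => i j; rewrite !mxE rmorph_nat. Qed.

Lemma adj_mx_herm : adj_mx R[i] e \is hermsymmx.
Proof.
apply/is_hermitianmxP; rewrite expr0 scale1r; apply/matrixP => i j.
by rewrite !mxE e_sym conjC_nat.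
Qed.

Lemma adj_mx_char_poly :
  char_poly (adj_mx R[i] e) = \prod_(t <- s) ('X - t%:C%:P).
Proof.
have [_ _ spec_s] := e_spec.
rewrite adj_mx_complex -map_char_poly spec_s rmorph_prod.
by apply: eq_bigr => t _; rewrite /= map_polyXsubC.
Qed.

Lemma spectrum_top : (count (fun t : R => (lam < t)%R) s <= 1)%N.
Proof.
have [size_s _ _] := e_spec.
apply: count_gt_le1 => i; rewrite size_s => /s_small.
exact/le_trans/real_ler_norm/num_real.
Qed.

Let ones : 'rV[R[i]]_n := const_mx 1.

Lemma ones_eigen : ones *m adj_mx R[i] e = d%:R%:C *: ones.
Proof.
apply/rowP => j; rewrite !mxE rmorph_nat mulr1 -(e_reg j) -sum1_card natr_sum.
rewrite [RHS]big_mkcond /=; apply: eq_bigr => i _.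
by rewrite !mxE mul1r e_sym /nbhd inE; case: (e j i).
Qed.

Lemma adj_form_le (x : 'I_n -> R) :
  \sum_i x i = 0 -> adj_form e x <= lam * \sum_i x i ^+ 2.
Proof.
move=> sum_x0; set xr := \row_i (x i)%:C.
have form_E : (adj_form e x)%:C = (xr *m adj_mx R[i] e *m xr^t*) 0 0.
  rewrite adj_mx_complex real_row_mul real_row_inner; congr (_%:C).
  by apply: eq_bigr => j _; congr (_ * _); apply: eq_bigr => i _; rewrite mxE.
have norm_E : (lam * \sum_i x i ^+ 2)%:C = lam%:C * (xr *m xr^t*) 0 0.
  by rewrite real_row_inner rmorphM; under eq_bigr do rewrite expr2.
rewrite -(@lecR R) form_E norm_E.
apply: (hermitian_form_le adj_mx_herm adj_mx_char_poly spectrum_top lam_d _ ones_eigen).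
  by apply/eqP => /rowP/(_ (Ordinal n_gt0)); rewrite !mxE => /eqP; rewrite oner_eq0.
have -> : ones = \row_i (1 : R)%:C by apply/rowP => i; rewrite !mxE rmorph1.
apply/matrixP => i j; rewrite !ord1 real_row_inner [RHS]mxE.
by under eq_bigr do rewrite mulr1; rewrite sum_x0 rmorph0.
Qed.

Lemma expander_mixing_cut (S : {set 'I_n}) :
  (d%:R - lam) * #|~: S|%:R * #|S|%:R <= n%:R * (cut_size e S)%:R.
Proof.
have := adj_form_le (cut_vector_sum R S).
rewrite (cut_vector_form _ S e_sym e_reg) cut_vector_norm => form_le.
have n_pos : 0 < n%:R :> R by rewrite ltr0n.
by rewrite -(ler_pM2l n_pos); lra.
Qed.

Lemma closed_set_small (r : nat) (S : {set 'I_n}) :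
  (0 < #|~: S|)%N -> (forall j, j \notin S -> (#|nbhd e j :&: S| < r)%N) ->
  (d%:R - lam) * #|S|%:R <= r.-1%:R * n%:R.
Proof.
move=> B_gt0 S_closed; have B_pos : 0 < #|~: S|%:R :> R by rewrite ltr0n.
have cut_le : (cut_size e S)%:R <= #|~: S|%:R * r.-1%:R :> R.
  by rewrite -natrM ler_nat cut_size_closed.
by have := le_trans (expander_mixing_cut S) (ler_wpM2l (ler0n _ n) cut_le); nra.
Qed.

End AdjacencySpectrum.

Lemma spectral_bound_ge0 (R : numDomainType) (n : nat) (s : seq R) (lam : R) :
  (forall i, (1 <= i < n)%N -> `|s`_i| <= lam) -> (1 < n)%N -> 0 <= lam.
Proof. by move=> s_small n_gt1; exact: le_trans (normr_ge0 _) (s_small 1%N n_gt1). Qed.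

(* The bootstrap closure [<A0>]: on [n] vertices, [n] rounds suffice. *)
Definition bp_closure (n : nat) (e : rel 'I_n) (r : nat) (A0 : {set 'I_n}) :=
  bp_iter e r A0 n.

(* Iterating an extensive map on the subsets of a finite type [T] reaches a
   fixed point within [#|T|] steps: each non-stationary step adds an element. *)
Lemma iter_extensive_fixed (T : finType) (f : {set T} -> {set T}) (A : {set T}) :
  (forall X : {set T}, X \subset f X) -> f (iter #|T| f A) = iter #|T| f A.
Proof.
move=> f_ext; apply/eqP; apply: contraT => not_fixed.
have moving k : (k <= #|T|)%N -> iter k.+1 f A != iter k f A.
  move=> le_kT; apply: contra not_fixed => /eqP fixed_k.
  have fixed_after j : iter (k + j).+1 f A = iter (k + j) f A.
    by elim: j => [|j IHj]; rewrite ?addn0 // addnS [LHS]iterS IHj.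
  by rewrite -(subnKC le_kT) -iterS fixed_after.
have growing k : (k <= #|T|.+1)%N -> (k <= #|iter k f A|)%N.
  elim: k => // k IHk lt_kT.
  have proper_k : iter k f A \proper iter k.+1 f A.
    by rewrite properEneq eq_sym moving // iterS f_ext.
  exact: leq_ltn_trans (IHk (ltnW lt_kT)) (proper_card proper_k).
by have := growing _ (leqnn _); rewrite ltnNge max_card.
Qed.

Section Closure.
Variables (n : nat) (e : rel 'I_n) (r : nat) (A0 : {set 'I_n}).
Local Notation S := (bp_closure e r A0).

Lemma bp_closure_fixed : bp_step e r S = S.
Proof.
have := iter_extensive_fixed (f := bp_step e r) A0 (fun X => subsetUl _ _).
by rewrite card_ord.
Qed.

Lemma bp_closure_sub : A0 \subset S.
Proof.
suff iter_sub k : A0 \subset bp_iter e r A0 k by apply: iter_sub.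
by elim: k => //= k IHk; exact: subset_trans IHk (subsetUl _ _).
Qed.

Lemma bp_closure_closed j : j \notin S -> (#|nbhd e j :&: S| < r)%N.
Proof.
apply: contraNT; rewrite -leqNgt => many_nbrs.
by rewrite -bp_closure_fixed !inE many_nbrs orbT.
Qed.

End Closure.

Lemma closure_size_arith (R : realFieldType) (m a t d lam delta : R) :
  0 < delta < 1 -> 0 < d -> lam < delta * d -> 0 <= a <= t ->
  (d - lam) * t <= m -> m / ((1 - delta) * d) < a -> False.
Proof.
move=> /andP[delta_gt0 delta_lt1] d_gt0 lam_lt /andP[a_ge0 a_le_t] small.
have q_gt0 : 0 < (1 - delta) * d by rewrite mulr_gt0 // subr_gt0.
have a_q : a * ((1 - delta) * d) <= t * ((1 - delta) * d).
  by apply: ler_wpM2r; [exact: ltW | exact: a_le_t].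
have t_q : t * ((1 - delta) * d) <= t * (d - lam).
  by apply: ler_wpM2l; [exact: le_trans a_le_t | lra].
by rewrite ltr_pdivrMr //; lra.
Qed.

Theorem lemma7 (R : rcfType) (n d r : nat) (lam delta : R) (e : rel 'I_n)
  (hdelta0 : 0 < delta) (hdelta1 : delta < 1) (hr : (2 <= r)%N)
  (hG : ndl_graph d lam e) (hlam : lam < delta * d%:R)
  (A0 : {set 'I_n})
  (hA : (r.-1)%:R * n%:R / ((1 - delta) * d%:R) < #|A0|%:R) :
  contagious e r A0.
Proof.
have [[e_sym _] e_reg [s [e_spec s_small]]] := hG.
set S := bp_closure e r A0.
have d_ge0 := ler0n R d.
have A0_gt0 : (0 < #|A0|)%N.
  rewrite -(ltr0n R); apply: le_lt_trans hA.
  by rewrite divr_ge0 ?mulr_ge0 // subr_ge0 ltW.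
move=> v; exists n; apply: contraT => vS.
have B_gt0 : (0 < #|~: S|)%N by rewrite card_gt0; apply/set0Pn; exists v; rewrite inE.
have A0_S : (#|A0| <= #|S|)%N by apply/subset_leq_card/bp_closure_sub.
have n_gt1 : (1 < n)%N.
  by rewrite -[n]card_ord -(cardsC S); exact: leq_add (leq_trans A0_gt0 A0_S) B_gt0.
have d_gt0 : 0 < d%:R :> R.
  rewrite lt_def d_ge0 andbT; apply: contraTneq hlam => ->.
  by rewrite mulr0 -leNgt (spectral_bound_ge0 s_small n_gt1).
have lam_d : lam < d%:R by apply: lt_le_trans hlam _; rewrite ger_pMl // ltW.
have small := closed_set_small e_sym e_reg e_spec s_small lam_d (ltnW n_gt1) B_gt0
  (@bp_closure_closed n e r A0).
exfalso; apply: (closure_size_arith _ d_gt0 hlam _ small hA).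
  by rewrite hdelta0.
by rewrite ler0n ler_nat.
Qed.
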